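(* Let $(R,\mathfrak{m})$ be an almost setup and $X$ a site which admits only finite coverings. Let $\cdots\to\mathcal{F}_2\to\mathcal{F}_1\to\mathcal{F}_0$ be an inverse system of presheaves of $R$-modules on $X$. If $\mathcal{F}_t^{\mathrm{al}}$ is a sheaf of almost $R$-modules for every $t\in\mathbb{N}$, then $\left(\varprojlim_{t\in\mathbb{N}}\mathcal{F}_t\right)^{\mathrm{al}}$ is a sheaf of almost $R$-modules as well.
   Context: An almost setup is a pair $(R,\mathfrak{m})$ of a commutative ring $R$ and an ideal $\mathfrak{m}$ with $\mathfrak{m}^2=\mathfrak{m}$ and $\mathfrak{m}\otimes_R\mathfrak{m}$ flat over $R$. Almost $R$-modules form the quotient of the category of $R$-modules by the Serre subcategory of modules $N$ with $\mathfrak{m}N=0$; $M\mapsto M^{\mathrm{al}}$ is the (exact, finite-product preserving) quotient functor. For a presheaf $\mathcal{F}$ of $R$-modules, $\mathcal{F}^{\mathrm{al}}$ is the presheaf $U\mapsto\mathcal{F}(U)^{\mathrm{al}}$; it is a sheaf of almost $R$-modules iff for every covering $\mathfrak{U}$ of every $U$ the sequence $0\to\mathcal{F}(U)\to\prod_{V\in\mathfrak{U}}\mathcal{F}(V)\to\prod_{W,W'\in\mathfrak{U}}\mathcal{F}(W\times_UW')$ becomes exact after applying $(-)^{\mathrm{al}}$. The inverse limit of presheaves is computed objectwise. *)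

From HB Require Import structures.
From Stdlib Require List.
From mathcomp Require Import all_boot all_algebra.
Set Implicit Arguments. Unset Strict Implicit. Unset Printing Implicit Defensive.
Import GRing.Theory.
Local Open Scope ring_scope.

Section Almost.
Variable R : comPzRingType.

Definition is_ideal (m : R -> Prop) : Prop :=
  m 0 /\ (forall x y, m x -> m y -> m (x + y)) /\ (forall r x, m x -> m (r * x)).

(* m^2 = m : (m^2 is the ideal of finite sums of products; m^2 \subset m is
   automatic for an ideal, so only the reverse inclusion is stated) *)
Definition ideal_idempotent (m : R -> Prop) : Prop :=
  forall x, m x -> exists (n : nat) (a b : nat -> R),
    (forall k, (k < n)%N -> m (a k) /\ m (b k)) /\ x = \sum_(k < n) a k * b k.

Definition bilin (N1 N2 M : lmodType R) (b : N1 -> N2 -> M) : Prop :=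
  forall x x' y y' (r : R),
    b (x + x') y = b x y + b x' y /\ b x (y + y') = b x y + b x y' /\
    b (r *: x) y = r *: b x y /\ b x (r *: y) = r *: b x y.

Definition is_tensor (N1 N2 T : lmodType R) (b : N1 -> N2 -> T) : Prop :=
  bilin b /\
  forall (M : lmodType R) (c : N1 -> N2 -> M), bilin c ->
    exists g : {linear T -> M},
      (forall x y, g (b x y) = c x y) /\
      (forall g' : {linear T -> M}, (forall x y, g' (b x y) = c x y) ->
         forall t, g' t = g t).

Definition bilin_ideal (m : R -> Prop) (M : lmodType R) (b : R -> R -> M) : Prop :=
  forall x x' y (r : R), m x -> m x' -> m y ->
    b (x + x') y = b x y + b x' y /\ b y (x + x') = b y x + b y x' /\
    b (r * x) y = r *: b x y /\ b y (r * x) = r *: b y x.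

Definition is_tensor_ideal (m : R -> Prop) (T : lmodType R) (b : R -> R -> T) : Prop :=
  bilin_ideal m b /\
  forall (M : lmodType R) (c : R -> R -> M), bilin_ideal m c ->
    exists g : {linear T -> M},
      (forall x y, m x -> m y -> g (b x y) = c x y) /\
      (forall g' : {linear T -> M}, (forall x y, m x -> m y -> g' (b x y) = c x y) ->
         forall t, g' t = g t).

Definition flat (T : lmodType R) : Prop :=
  forall (N N' : lmodType R) (f : {linear N -> N'}), injective f ->
  forall (TN : lmodType R) (bN : T -> N -> TN) (TN' : lmodType R) (bN' : T -> N' -> TN'),
    is_tensor bN -> is_tensor bN' ->
    forall g : {linear TN -> TN'}, (forall t n, g (bN t n) = bN' t (f n)) ->
    injective g.

Definition almost_setup (m : R -> Prop) : Prop :=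
  is_ideal m /\ ideal_idempotent m /\
  exists (T : lmodType R) (b : R -> R -> T), is_tensor_ideal m b /\ flat T.

End Almost.

Record family (O : Type) (H : O -> O -> Type) (U : O) := Family {
  fidx : Type;
  fobj : fidx -> O;
  fmor : forall i, H (fobj i) U }.
Arguments Family {O H U} fidx fobj fmor.
Arguments fidx {O H U}.
Arguments fobj {O H U}.
Arguments fmor {O H U}.

Section SiteDefs.
Variables (O : Type) (H : O -> O -> Type) (idm : forall U, H U U)
          (comp : forall U V W, H V W -> H U V -> H U W).
Arguments comp {U V W}.

Definition is_fibre_product (U A B : O) (f : H A U) (g : H B U)
    (P : O) (p1 : H P A) (p2 : H P B) : Prop :=
  comp f p1 = comp g p2 /\
  forall (Q : O) (q1 : H Q A) (q2 : H Q B), comp f q1 = comp g q2 ->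
    exists! h : H Q P, comp p1 h = q1 /\ comp p2 h = q2.

Definition is_iso (U V : O) (f : H V U) : Prop :=
  exists g : H U V, comp f g = idm U /\ comp g f = idm V.

Definition single_family (U V : O) (f : H V U) : family H U :=
  Family unit (fun _ => V) (fun _ => f).

Definition compose_family (U : O) (c : family H U)
    (d : forall i, family H (fobj c i)) : family H U :=
  Family {i : fidx c & fidx (d i)}
         (fun p => fobj (d (projT1 p)) (projT2 p))
         (fun p => comp (fmor c (projT1 p)) (fmor (d (projT1 p)) (projT2 p))).

End SiteDefs.

Record site := Site {
  Obj : Type;
  Hom : Obj -> Obj -> Type;
  idm : forall U, Hom U U;
  comp : forall U V W, Hom V W -> Hom U V -> Hom U W;
  comp_assoc : forall U V W Z (f : Hom W Z) (g : Hom V W) (h : Hom U V),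
      comp f (comp g h) = comp (comp f g) h;
  comp_idl : forall U V (f : Hom U V), comp (idm V) f = f;
  comp_idr : forall U V (f : Hom U V), comp f (idm U) = f;
  Cov : forall U, family Hom U -> Prop;
  cov_iso : forall U V (f : Hom V U), is_iso idm comp f -> Cov (single_family f);
  cov_trans : forall U (c : family Hom U), Cov c ->
      forall d : forall i, family Hom (fobj c i), (forall i, Cov (d i)) ->
      Cov (compose_family comp d);
  cov_base_change : forall U (c : family Hom U), Cov c ->
      forall V (g : Hom V U),
      exists (P : fidx c -> Obj) (p1 : forall i, Hom (P i) (fobj c i))
             (p2 : forall i, Hom (P i) V),
        (forall i, is_fibre_product comp (fmor c i) g (p1 i) (p2 i)) /\
        Cov (Family (fidx c) P p2) }.
Arguments idm {s}.
Arguments comp {s U V W}.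
Arguments Cov {s U}.

Definition finite_coverings (X : site) : Prop :=
  forall U (c : family (@Hom X) U), Cov c ->
    exists s : seq (fidx c), forall i, List.In i s.

Record presheaf (R : comPzRingType) (X : site) := Presheaf {
  sec :> Obj X -> lmodType R;
  res : forall U V : Obj X, Hom U V -> {linear sec V -> sec U};
  res_id : forall U (s : sec U), res (idm U) s = s;
  res_comp : forall U V W (f : Hom U V) (g : Hom V W) (s : sec W),
      res (comp g f) s = res f (res g s) }.
Arguments res {R X} p {U V}.

Section Presheaves.
Variables (R : comPzRingType) (X : site).

Definition is_presheaf_morph (F G : presheaf R X)
    (phi : forall U, {linear F U -> G U}) : Prop :=
  forall (U V : Obj X) (f : Hom U V) (s : F V), phi U (res F f s) = res G f (phi V s).

Definition inverse_system (F : nat -> presheaf R X)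
    (phi : forall t U, {linear F t.+1 U -> F t U}) : Prop :=
  forall t, is_presheaf_morph (phi t).

(* (L, pi) is the inverse limit of the system, computed objectwise:
   pi is a compatible cone of presheaf morphisms and for every object U,
   L(U) -> lim_t F_t(U) is bijective *)
Definition is_inverse_limit (F : nat -> presheaf R X)
    (phi : forall t U, {linear F t.+1 U -> F t U})
    (L : presheaf R X) (pi : forall t U, {linear L U -> F t U}) : Prop :=
  (forall t, is_presheaf_morph (pi t)) /\
  (forall t U (s : L U), phi t U (pi t.+1 U s) = pi t U s) /\
  (forall U (x : forall t, F t U), (forall t, phi t U (x t.+1) = x t) ->
     exists! s : L U, forall t, pi t U s = x t).

(* F^al is a sheaf of almost R-modules: for every covering {V_i -> U} the
   sequence 0 -> F(U) -> prod_i F(V_i) -> prod_(i,j) F(V_i x_U V_j)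
   becomes exact after (-)^al, i.e. its homology at F(U) and at
   prod_i F(V_i) is almost zero (killed by m). *)
Definition almost_sheaf (m : R -> Prop) (F : presheaf R X) : Prop :=
  forall (U : Obj X) (c : family (@Hom X) U), Cov c ->
    (forall s : F U, (forall i, res F (fmor c i) s = 0) ->
       forall e, m e -> e *: s = 0) /\
    (forall x : forall i, F (fobj c i),
       (forall i j (P : Obj X) (p1 : Hom P (fobj c i)) (p2 : Hom P (fobj c j)),
          is_fibre_product (@comp X) (fmor c i) (fmor c j) p1 p2 ->
          res F p1 (x i) = res F p2 (x j)) ->
       forall e, m e -> exists s : F U, forall i, res F (fmor c i) s = e *: x i).

End Presheaves.

(* Fix a covering {V_i -> U} and a compatible family x_i of sections of the
   limit L.  In each F_t the projections of e1 x_i glue to some s_t; the s_t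
   need not form a compatible system, but phi(s_{t+1}) - s_t restricts to 0 on
   the covering, so it is killed by any e2 in m.  Hence the e2 s_t define a
   section of L gluing (e1 e2) x_i.  Gluable multiples of x form an additive
   subgroup, and m = m^2 consists of sums of such products e1 e2. *)
From mathcomp Require Import all_boot all_algebra.
From Stdlib Require Import ClassicalEpsilon.
Import GRing.Theory.
Local Open Scope ring_scope.

Lemma idempotent_ideal_sub (R : comPzRingType) (m S : R -> Prop) :
    ideal_idempotent m -> S 0 -> (forall x y, S x -> S y -> S (x + y)) ->
    (forall a b, m a -> m b -> S (a * b)) ->
  forall e, m e -> S e.
Proof.
move=> idem S0 SD Sprod e /idem [n [a [b [mab ->]]]].
elim: n mab => [|n IHn] mab; first by rewrite big_ord0.
rewrite big_ord_recr /=; apply: SD.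
  by apply: IHn => k lt_kn; apply: mab; apply: ltnW.
by have [ma mb] := mab n (ltnSn n); apply: Sprod.
Qed.

Section InverseLimit.
Variables (R : comPzRingType) (m : R -> Prop) (X : site).
Variables (F : nat -> presheaf R X) (phi : forall t U, {linear F t.+1 U -> F t U}).
Variables (L : presheaf R X) (pi : forall t U, {linear L U -> F t U}).
Hypothesis phi_morph : inverse_system phi.
Hypothesis pi_morph : forall t, is_presheaf_morph (pi t).
Hypothesis pi_compat : forall t U (s : L U), phi t U (pi t.+1 U s) = pi t U s.
Hypothesis limit_univ : forall U (x : forall t, F t U),
  (forall t, phi t U (x t.+1) = x t) -> exists! s : L U, forall t, pi t U s = x t.
Hypothesis F_almost : forall t, almost_sheaf m (F t).

Lemma limit_sec_eq U (a b : L U) : (forall t, pi t U a = pi t U b) -> a = b.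
Proof.
move=> eq_ab.
have [s [_ s_uniq]] := @limit_univ U _ (fun t => pi_compat t U a).
by rewrite -(s_uniq a (fun t => erefl)) -(s_uniq b (fun t => esym (eq_ab t))).
Qed.

Variables (U : Obj X) (c : family (@Hom X) U).
Hypothesis c_cov : Cov c.

Lemma limit_almost_injective (s : L U) :
  (forall i, res L (fmor c i) s = 0) -> forall e, m e -> e *: s = 0.
Proof.
move=> s_loc0 e me; apply: limit_sec_eq => t.
rewrite linearZZ linear0; apply: (proj1 (F_almost t U c c_cov)) => // i.
by rewrite -pi_morph s_loc0 linear0.
Qed.

Variable x : forall i, L (fobj c i).
Hypothesis x_compat : forall i j (P : Obj X) (p1 : Hom P (fobj c i)) (p2 : Hom P (fobj c j)),
  is_fibre_product (@comp X) (fmor c i) (fmor c j) p1 p2 -> res L p1 (x i) = res L p2 (x j).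

Lemma limit_glue_mul e1 e2 : m e1 -> m e2 ->
  exists s : L U, forall i, res L (fmor c i) s = (e1 * e2) *: x i.
Proof.
move=> me1 me2.
have glue_t t : {s : F t U | forall i, res (F t) (fmor c i) s = e1 *: pi t _ (x i)}.
  apply: constructive_indefinite_description.
  apply: (proj2 (F_almost t U c c_cov) (fun i => pi t _ (x i))) => // i j P p1 p2 fp.
  by rewrite -!pi_morph (x_compat i j P p1 p2 fp).
pose y t := e2 *: sval (glue_t t).
have y_compat t : phi t U (y t.+1) = y t.
  apply/eqP; rewrite /y linearZ -subr_eq0 -scalerBr; apply/eqP.
  apply: (proj1 (F_almost t U c c_cov)) => // i.
  by rewrite linearB -phi_morph !(svalP (glue_t _)) linearZZ pi_compat subrr.
have [s [pi_s _]] := @limit_univ U _ y_compat.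
exists s => i; apply: limit_sec_eq => t.
by rewrite pi_morph pi_s /y !linearZZ (svalP (glue_t t)) scalerA mulrC.
Qed.

Lemma limit_glue_ideal (idem : ideal_idempotent m) e : m e ->
  exists s : L U, forall i, res L (fmor c i) s = e *: x i.
Proof.
move: e; apply: (@idempotent_ideal_sub _ m
  (fun r => exists s : L U, forall i, res L (fmor c i) s = r *: x i) idem).
- by exists 0 => i; rewrite linear0 scale0r.
- move=> r1 r2 [s1 s1_glue] [s2 s2_glue].
  by exists (s1 + s2) => i; rewrite linearD s1_glue s2_glue scalerDl.
- exact: limit_glue_mul.
Qed.

End InverseLimit.

Theorem lemmaB8 (R : comPzRingType) (m : R -> Prop) (Hm : almost_setup m)
    (X : site) (HX : finite_coverings X)
    (F : nat -> presheaf R X) (phi : forall t U, {linear F t.+1 U -> F t U})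
    (Hsys : inverse_system phi)
    (L : presheaf R X) (pi : forall t U, {linear L U -> F t U})
    (Hlim : is_inverse_limit phi pi)
    (HF : forall t, almost_sheaf m (F t)) :
  almost_sheaf m L.
Proof.
have [_ [idem _]] := Hm.
have [pi_morph [pi_compat limit_univ]] := Hlim.
move=> U c c_cov; split.
  exact: limit_almost_injective pi_morph pi_compat limit_univ HF U c c_cov.
move=> x x_compat.
exact: limit_glue_ideal Hsys pi_morph pi_compat limit_univ HF U c c_cov x x_compat idem.
Qed.
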